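(* Let $f:\mathbb{R}^d\to\mathbb{R}$ be convex and differentiable with $L$-Lipschitz gradient and a minimizer $x^*$. For $x\in\mathbb{R}^d$ let $\phi_x(\lambda)=f(x-\lambda\nabla f(x))$. Let $x_1=y_1\in\mathbb{R}^d$, $\lambda_0\ge1/(3L)$, $\beta_1=1$, $\beta_{k+1}=\frac{1+\sqrt{1+4\beta_k^2}}{2}$, and for $k\ge1$: $\lambda_k=\max\{\lambda\in(0,\lambda_{k-1}]:\ \phi_{x_k}(2\lambda)\le\phi_{x_k}(\lambda)+\tfrac{\lambda}{2}\phi_{x_k}'(0)\}$, $y_{k+1}=x_k-\lambda_k\nabla f(x_k)$, $x_{k+1}=y_{k+1}+\frac{\beta_k-1}{\beta_{k+1}}(y_{k+1}-y_k)$. Then $\lambda_k\ge1/(3L)$ for all $k\ge1$, and there is a constant $D'$ depending only on $x_1$, $x^*$, $L$ such that $f(y_{k+1})-f(x^* )\le D'/k^2$ for all $k\ge1$.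
   Context: $\mathbb{R}^d$ carries the standard inner product and Euclidean norm $\|\cdot\|$; $\phi_x'(0)=-\|\nabla f(x)\|^2$ denotes the derivative of $\phi_x$ at $0$. This is the case $h\equiv0$ of the accelerated composite scheme, where the gradient mapping reduces to $\nabla f$. *)

From HB Require Import structures.
From mathcomp Require Import all_boot all_order all_algebra.
From mathcomp Require Import all_classical all_reals all_analysis.
Set Implicit Arguments. Unset Strict Implicit. Unset Printing Implicit Defensive.
Import Order.TTheory GRing.Theory Num.Theory.
Import numFieldNormedType.Exports.
Local Open Scope ring_scope.

(* Standard inner product and Euclidean norm on R^d = 'rV[R]_d
   (the library's norm on matrices is the max norm, so we define these). *)
Definition dotv {R : realType} {d : nat} (u v : 'rV[R]_d) : R :=
  \sum_(i < d) u ord0 i * v ord0 i.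

Definition enorm {R : realType} {d : nat} (u : 'rV[R]_d) : R :=
  Num.sqrt (dotv u u).

Definition is_gradient {R : realType} {d : nat}
  (f : 'rV[R]_d -> R) (g : 'rV[R]_d -> 'rV[R]_d) : Prop :=
  forall x : 'rV[R]_d, differentiable f x /\
    forall v : 'rV[R]_d, 'D_v f x = dotv (g x) v.

Definition convex_fun {R : realType} {d : nat} (f : 'rV[R]_d -> R) : Prop :=
  forall (x y : 'rV[R]_d) (t : R), 0 <= t <= 1 ->
    f (t *: x + (1 - t) *: y) <= t * f x + (1 - t) * f y.

Definition phi {R : realType} {d : nat}
  (f : 'rV[R]_d -> R) (g : 'rV[R]_d -> 'rV[R]_d) (x : 'rV[R]_d) (l : R) : R :=
  f (x - l *: g x).

(* phi_x'(0) = - ||grad f(x)||^2 *)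
Definition dphi0 {R : realType} {d : nat}
  (g : 'rV[R]_d -> 'rV[R]_d) (x : 'rV[R]_d) : R := - (enorm (g x)) ^+ 2.

Definition ls_cond {R : realType} {d : nat}
  (f : 'rV[R]_d -> R) (g : 'rV[R]_d -> 'rV[R]_d) (x : 'rV[R]_d) (l : R) : Prop :=
  phi f g x (2 * l) <= phi f g x l + l / 2 * dphi0 g x.

Definition is_max_step {R : realType} {d : nat}
  (f : 'rV[R]_d -> R) (g : 'rV[R]_d -> 'rV[R]_d) (x : 'rV[R]_d) (b m : R) : Prop :=
  (0 < m <= b /\ ls_cond f g x m) /\
  forall l : R, 0 < l <= b -> ls_cond f g x l -> l <= m.

(* Two facts drive the proof.  First, along the ray t |-> x - t grad f(x) the
   Lipschitz gradient gives the quadratic upper bound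
   phi(t) <= f(x) - t |grad f(x)|^2 + L t^2 |grad f(x)|^2 / 2, which makes the
   acceptance test hold at 1/(3L); as lambda_{k-1} >= 1/(3L) is admissible, the
   maximal step keeps lambda_k >= 1/(3L).  Second, midpoint convexity between
   phi(lambda) and phi(2 lambda) turns the acceptance test into the usual
   gradient-step inequality f(y) <= f(z) + <g, x - z> - lambda/2 |g|^2, which is
   all the classical FISTA estimate needs: with beta_{k+1}^2 - beta_{k+1} =
   beta_k^2 and nonincreasing steps, the energy
   2 lambda_k beta_k^2 (f(y_{k+1}) - min f) + |beta_k y_{k+1} - (beta_k - 1) y_k - x*|^2
   never increases, and beta_k >= (k+1)/2. *)
From HB Require Import structures.
From mathcomp Require Import all_boot all_order all_algebra.
From mathcomp Require Import all_classical all_reals all_analysis.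
From mathcomp Require Import lra ring.
Import Order.TTheory GRing.Theory Num.Theory.
Import numFieldNormedType.Exports.
Local Open Scope ring_scope.

Section InnerProduct.
Context {R : realType} {d : nat}.
Implicit Types (u v w : 'rV[R]_d).

Lemma dotvC u v : dotv u v = dotv v u.
Proof. by apply: eq_bigr => i _; rewrite mulrC. Qed.

Lemma dotvDl u v w : dotv (u + v) w = dotv u w + dotv v w.
Proof. by rewrite /dotv -big_split; apply: eq_bigr => i _; rewrite mxE mulrDl. Qed.

Lemma dotvZl a u v : dotv (a *: u) v = a * dotv u v.
Proof. by rewrite /dotv mulr_sumr; apply: eq_bigr => i _; rewrite mxE mulrA. Qed.

Lemma dotvNl u v : dotv (- u) v = - dotv u v.
Proof. by rewrite -scaleN1r dotvZl mulN1r. Qed.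

Lemma dotvBl u v w : dotv (u - v) w = dotv u w - dotv v w.
Proof. by rewrite dotvDl dotvNl. Qed.

Lemma dotvDr u v w : dotv w (u + v) = dotv w u + dotv w v.
Proof. by rewrite dotvC dotvDl !(dotvC w). Qed.

Lemma dotvZr a u v : dotv v (a *: u) = a * dotv v u.
Proof. by rewrite dotvC dotvZl dotvC. Qed.

Lemma dotvBr u v w : dotv w (u - v) = dotv w u - dotv w v.
Proof. by rewrite !(dotvC w) dotvBl. Qed.

Lemma dotvv_ge0 u : 0 <= dotv u u.
Proof. by apply: sumr_ge0 => i _; rewrite -expr2 sqr_ge0. Qed.

Lemma dotvv_eq0 u v : dotv u u = 0 -> dotv u v = 0.
Proof.
move=> /eqP; rewrite psumr_eq0 => [/allP u0|i _]; last by rewrite -expr2 sqr_ge0.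
apply: big1 => i _; have /implyP/(_ isT) := u0 i (mem_index_enum _).
by rewrite mulf_eq0 orbb => /eqP ->; rewrite mul0r.
Qed.

Lemma dotv_subZ u v (b : R) :
  dotv (u - b *: v) (u - b *: v) = dotv u u - 2 * b * dotv v u + b ^+ 2 * dotv v v.
Proof. by rewrite !(dotvBl, dotvBr, dotvZl, dotvZr) (dotvC u v); ring. Qed.

Lemma enorm_ge0 u : 0 <= enorm u.
Proof. exact: sqrtr_ge0. Qed.

Lemma sqr_enorm u : enorm u ^+ 2 = dotv u u.
Proof. by rewrite /enorm sqr_sqrtr // dotvv_ge0. Qed.

Lemma enormZ a u : enorm (a *: u) = `|a| * enorm u.
Proof. by rewrite /enorm dotvZl dotvZr mulrA -expr2 sqrtrM ?sqr_ge0 // sqrtr_sqr. Qed.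

Lemma dotv_sqr_le u v : dotv u v ^+ 2 <= dotv u u * dotv v v.
Proof.
have := dotvv_ge0 (dotv v v *: u - dotv u v *: v).
rewrite !(dotvBl, dotvBr, dotvZl, dotvZr) (dotvC v u).
have := dotvv_ge0 v; rewrite le0r => /orP [/eqP v0 _|v_gt0 nonneg].
  by rewrite dotvC (dotvv_eq0 v u v0) v0 expr0n mulr0.
nra.
Qed.

Lemma dotv_le_enormM u v : dotv u v <= enorm u * enorm v.
Proof.
rewrite /enorm -sqrtrM ?dotvv_ge0 //.
have [uv_le0|uv_gt0] := lerP (dotv u v) 0; first exact: le_trans uv_le0 (sqrtr_ge0 _).
by rewrite -[dotv u v]gtr0_norm // -sqrtr_sqr ler_sqrt ?dotv_sqr_le ?mulr_ge0 ?dotvv_ge0.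
Qed.

End InnerProduct.

Lemma convex_gradient_le {R : realType} {d : nat} {f : 'rV[R]_d -> R} {g} :
  convex_fun f -> is_gradient f g -> forall x y, f x + dotv (g x) (y - x) <= f y.
Proof.
move=> cvx_f grad_g x y; have [df Df] := grad_g x.
rewrite -(Df (y - x)) addrC -lerBrDr.
apply: (cvgr_to_le (cvg_dnbhs_at_right (@diff_derivable _ _ _ f x (y - x) df))).
near=> h.
have h_gt0 : 0 < h by near: h; exact: nbhs_right_gt.
have h_le1 : h <= 1 by near: h; exact: nbhs_right_le.
rewrite /= -[h *: (y - x) + x]/(h *: (y - x) + x).
have -> : h *: (y - x) + x = h *: y + (1 - h) *: x.
  by rewrite scalerBr scalerBl scale1r addrA addrAC.
have cvx_step := cvx_f y x h (andb_true_intro (conj (ltW h_gt0) h_le1)).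
rewrite [X in X <= _]mulrC ler_pdivrMr //; nra.
Unshelve. all: by end_near.
Qed.

(* A subdivision argument: splitting [t, s] into n pieces bounds the increment by K (s - t)^2 / n. *)
Lemma nonincreasing_of_sqr_increment (R : realType) (h : R -> R) (K : R) :
  (forall t s, 0 <= t <= s -> h s - h t <= K * (s - t) ^+ 2) ->
  forall t s, 0 <= t <= s -> h s <= h t.
Proof.
move=> incr t s /andP [t_ge0 ts].
have telescope n e : 0 <= e -> h (t + n%:R * e) - h t <= n%:R * (K * e ^+ 2).
  move=> e_ge0; elim: n => [|n IH]; first by rewrite !mul0r addr0 subrr.
  have := incr (t + n%:R * e) (t + n%:R * e + e).
  rewrite addr_ge0 ?mulr_ge0 // lerDl e_ge0 => /(_ isT).
  have -> : t + n%:R * e + e - (t + n%:R * e) = e by ring.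
  by rewrite -natr1 mulrDl mul1r addrA; lra.
rewrite -subr_le0 leNgt; apply/negP => incr_gt0.
set D := h s - h t in incr_gt0; set M := K * (s - t) ^+ 2.
set n := (Num.truncn (M / D)).+1.
have n_gt0 : 0 < n%:R :> R by rewrite ltr0n.
have step_ge0 : 0 <= (s - t) / n%:R by rewrite divr_ge0 ?subr_ge0 // ltW.
have := telescope n _ step_ge0.
have -> : t + n%:R * ((s - t) / n%:R) = s by field; rewrite lt0r_neq0.
have -> : n%:R * (K * ((s - t) / n%:R) ^+ 2) = M / n%:R.
  by rewrite /M; field; rewrite lt0r_neq0.
rewrite -/D ler_pdivlMr // => nD_le.
have := truncnS_gt (M / D); rewrite -/n ltr_pdivrMr // mulrC; lra.
Qed.

Section LineSearch.
Context {R : realType} {d : nat} {f : 'rV[R]_d -> R} {g : 'rV[R]_d -> 'rV[R]_d} {L : R}.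
Hypotheses (cvx_f : convex_fun f) (grad_g : is_gradient f g) (L_gt0 : 0 < L)
  (lipschitz_g : forall u v, enorm (g u - g v) <= L * enorm (u - v)).

Lemma phi_sub_le x t s : 0 <= t <= s ->
  phi f g x s - phi f g x t <= (s - t) * (L * s - 1) * dotv (g x) (g x).
Proof.
move=> /andP [t_ge0 ts]; have s_ge0 : 0 <= s := le_trans t_ge0 ts.
set G := g x; set c := dotv G G; set z := x - s *: G.
have := convex_gradient_le cvx_f grad_g z (x - t *: G).
have -> : x - t *: G - z = (s - t) *: G by apply/rowP => i; rewrite !mxE; ring.
rewrite dotvZr => cvx_ineq.
have lip_z : enorm (G - g z) <= L * s * enorm G.
  have := lipschitz_g x z.
  have -> : x - z = s *: G by apply/rowP => i; rewrite !mxE; ring.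
  by rewrite enormZ ger0_norm // mulrA.
have dG_le : dotv (G - g z) G <= L * s * c.
  apply: le_trans (dotv_le_enormM _ _) _.
  by rewrite /c -sqr_enorm expr2 mulrA ler_wpM2r ?enorm_ge0.
have gzG : dotv (g z) G = c - dotv (G - g z) G by rewrite dotvBl /c; ring.
have := mulr_ge0 (_ : 0 <= s - t) (_ : 0 <= L * s * c - dotv (G - g z) G).
rewrite subr_ge0 ts subr_ge0 dG_le => /(_ isT isT).
rewrite gzG in cvx_ineq; rewrite /phi -/G -/z; nra.
Qed.

Lemma ls_cond_third x : ls_cond f g x (1 / (3 * L)).
Proof.
set c := dotv (g x) (g x).
pose h t := phi f g x t + c * t - c * L * t ^+ 2 / 2.
have h_noninc : forall t s, 0 <= t <= s -> h s <= h t.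
  apply: (@nonincreasing_of_sqr_increment _ h (c * L / 2)) => t s ts.
  have := phi_sub_le x t s ts; rewrite -/c /h.
  have -> : c * L / 2 * (s - t) ^+ 2 = (s - t) * (L * s - 1) * c
    + c * s - c * L * s ^+ 2 / 2 - (c * t - c * L * t ^+ 2 / 2) by field.
  lra.
set l := 1 / (3 * L).
have l_gt0 : 0 < l by rewrite divr_gt0 // mulr_gt0.
have Ll : L * l = 1 / 3 by rewrite /l; field; rewrite lt0r_neq0.
have := h_noninc l (2 * l); rewrite ltW //= ler_pMl ?ler1n // => /(_ isT).
rewrite /h /ls_cond /dphi0 sqr_enorm -/c.
have -> : c * L * (2 * l) ^+ 2 / 2 = 2 * (c * l) * (L * l) by field.
have -> : c * L * l ^+ 2 / 2 = (c * l) * (L * l) / 2 by field.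
rewrite Ll; lra.
Qed.

End LineSearch.

(* Midpoint convexity between phi(l) and phi(2 l), plus the gradient inequality at x. *)
Lemma ls_cond_descent {R : realType} {d : nat} {f : 'rV[R]_d -> R} {g} x l z :
  convex_fun f -> is_gradient f g -> ls_cond f g x l ->
  f (x - l *: g x) <= f z + dotv (g x) (x - z) - l / 2 * dotv (g x) (g x).
Proof.
move=> cvx_f grad_g; rewrite /ls_cond /phi /dphi0 sqr_enorm => ls.
have := cvx_f (x - (2 * l) *: g x) x (1 / 2).
have -> : 1 / 2 *: (x - (2 * l) *: g x) + (1 - 1 / 2) *: x = x - l *: g x.
  by apply/rowP => i; rewrite !mxE; field.
have half01 : (0 <= (1 / 2 : R)) && ((1 / 2 : R) <= 1) by apply/andP; split; lra.
move=> /(_ half01) midpoint.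
have := convex_gradient_le cvx_f grad_g x z.
have -> : dotv (g x) (z - x) = - dotv (g x) (x - z) by rewrite !dotvBr; ring.
lra.
Qed.

Definition beta_next {R : realType} (t : R) := (1 + Num.sqrt (1 + 4 * t ^+ 2)) / 2.

Lemma beta_next_rad_ge0 {R : realType} (t : R) : 0 <= 1 + 4 * t ^+ 2.
Proof. by rewrite addr_ge0 // mulr_ge0 // sqr_ge0. Qed.

Lemma beta_nextE {R : realType} (t : R) : beta_next t ^+ 2 - beta_next t = t ^+ 2.
Proof.
rewrite /beta_next; have := sqr_sqrtr (beta_next_rad_ge0 t).
set s := Num.sqrt _ => s2.
have -> : ((1 + s) / 2) ^+ 2 - (1 + s) / 2 = (s ^+ 2 - 1) / 4 by field.
by rewrite s2; field.
Qed.

Lemma beta_next_ge {R : realType} (t : R) : 0 <= t -> t + 1 / 2 <= beta_next t.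
Proof.
move=> t_ge0; suff : 2 * t <= Num.sqrt (1 + 4 * t ^+ 2) by rewrite /beta_next; lra.
have t2_ge0 : 0 <= 2 * t by rewrite mulr_ge0.
by rewrite -[2 * t]ger0_norm // -sqrtr_sqr ler_sqrt ?beta_next_rad_ge0 // exprMn; lra.
Qed.

Section Fista.
Context {R : realType} {d : nat} {f : 'rV[R]_d -> R} {g : 'rV[R]_d -> 'rV[R]_d} {L : R}.
Context {xs : 'rV[R]_d} {x y : nat -> 'rV[R]_d} {lam beta : nat -> R}.
Hypotheses (cvx_f : convex_fun f) (grad_g : is_gradient f g) (L_gt0 : 0 < L)
  (lipschitz_g : forall u v, enorm (g u - g v) <= L * enorm (u - v))
  (xs_min : forall u, f xs <= f u)
  (lam0_ge : 1 / (3 * L) <= lam 0%N) (beta1 : beta 1%N = 1)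
  (betaS : forall k, (1 <= k)%N -> beta k.+1 = beta_next (beta k))
  (lam_max : forall k, (1 <= k)%N -> is_max_step f g (x k) (lam k.-1) (lam k))
  (yS : forall k, (1 <= k)%N -> y k.+1 = x k - lam k *: g (x k))
  (xS : forall k, (1 <= k)%N ->
     x k.+1 = y k.+1 + ((beta k - 1) / beta k.+1) *: (y k.+1 - y k)).

Lemma lam_ge_third k : (1 <= k)%N -> 1 / (3 * L) <= lam k.
Proof.
have third_gt0 : 0 < 1 / (3 * L) by rewrite divr_gt0 // mulr_gt0.
elim: k => [//|k IH] _; have [_ lam_maximal] := lam_max k.+1 isT.
apply: lam_maximal; last exact: ls_cond_third cvx_f grad_g L_gt0 lipschitz_g _.
by rewrite third_gt0 /=; case: k IH => [_|k /(_ isT)].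
Qed.

Lemma beta_ge k : (1 <= k)%N -> (k%:R + 1) / 2 <= beta k.
Proof.
elim: k => [//|[_ _|k IH _]]; first by rewrite beta1; lra.
have IHk := IH isT.
have beta_ge0 : 0 <= beta k.+1 by apply: le_trans IHk; rewrite divr_ge0 ?addr_ge0.
have := beta_next_ge _ beta_ge0; rewrite -betaS // -[k.+2]addn1 natrD; lra.
Qed.

Let u k := beta k *: y k.+1 - (beta k - 1) *: y k - xs.
Let energy k := 2 * lam k * beta k ^+ 2 * (f (y k.+1) - f xs) + dotv (u k) (u k).

Lemma lam_gt0 k : (1 <= k)%N -> 0 < lam k.
Proof. by move=> /lam_max [[/andP []]]. Qed.

Lemma descent_at k z : (1 <= k)%N ->
  f (y k.+1) <= f z + dotv (g (x k)) (x k - z) - lam k / 2 * dotv (g (x k)) (g (x k)).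
Proof.
move=> k_ge1; rewrite yS //; apply: ls_cond_descent cvx_f grad_g _.
by have [[]] := lam_max k k_ge1.
Qed.

Lemma energy1_le : energy 1 <= dotv (x 1%N - xs) (x 1%N - xs).
Proof.
rewrite /energy; have -> : u 1%N = (x 1%N - xs) - lam 1%N *: g (x 1%N).
  by apply/rowP => i; rewrite /u beta1 yS // !mxE; ring.
have := descent_at 1 xs isT; have := lam_gt0 1 isT.
rewrite beta1 dotv_subZ.
set l := lam 1%N; set a := dotv _ (x 1%N - xs); set c := dotv _ (g _).
nra.
Qed.

Lemma energyS_le k : (1 <= k)%N -> energy k.+1 <= energy k.
Proof.
move=> k_ge1; rewrite /energy.
set X := x k.+1; set G := g X; set t := beta k.+1; set l := lam k.+1.
have t_ge1 : 1 <= t.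
  by have := beta_ge k.+1 isT; rewrite -/t -natr1; have := ler0n R k; lra.
have uk_split : u k = (t - 1) *: (X - y k.+1) + (X - xs).
  apply/rowP => i; rewrite /u /X xS // !mxE -/t; field.
  by apply/negP => /eqP t0; move: t_ge1; rewrite t0; lra.
have uS : u k.+1 = u k - (t * l) *: G.
  rewrite uk_split /u yS // -/X -/G -/l -/t.
  by apply/rowP => i; rewrite !mxE; ring.
have G_uk : dotv G (u k) = (t - 1) * dotv G (X - y k.+1) + dotv G (X - xs).
  by rewrite uk_split [LHS]dotvDr dotvZr.
rewrite uS dotv_subZ G_uk -/t -/l.
set d1 := f (y k.+1) - f xs; set d2 := f (y k.+2) - f xs; set c := dotv G G.
set a1 := dotv G (X - y k.+1); set a2 := dotv G (X - xs).
have to_prev : d2 <= d1 + a1 - l / 2 * c.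
  by have := descent_at k.+1 (y k.+1) isT; rewrite -/X -/G -/l -/c -/a1 /d1 /d2; lra.
have to_min : d2 <= a2 - l / 2 * c.
  by have := descent_at k.+1 xs isT; rewrite -/X -/G -/l -/c -/a2 /d2; lra.
(* average of the two descent inequalities with weights (t - 1)/t and 1/t *)
have avg : t * d2 <= (t - 1) * (d1 + a1) + a2 - t * l * c / 2.
  have := mulr_ge0 (_ : 0 <= t - 1) (_ : 0 <= d1 + a1 - l / 2 * c - d2).
  by rewrite !subr_ge0 t_ge1 to_prev => /(_ isT isT); nra.
have l_le : l <= lam k by have [[/andP []]] := lam_max k.+1 isT.
have tsq : beta k ^+ 2 = t ^+ 2 - t by rewrite /t betaS // beta_nextE.
have l_gt0 : 0 < l := lam_gt0 k.+1 isT.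
have lt_ge0 : 0 <= 2 * l * t.
  by rewrite !mulr_ge0 //; [exact: ltW | exact: le_trans ler01 t_ge1].
have d1_ge0 : 0 <= d1 by rewrite subr_ge0.
have tsq_d1_ge0 : 0 <= 2 * (t ^+ 2 - t) * d1 by rewrite mulr_ge0 // mulr_ge0 // -tsq sqr_ge0.
have := ler_wpM2l lt_ge0 avg; have := ler_wpM2r tsq_d1_ge0 l_le.
rewrite tsq; lra.
Qed.

Lemma energy_le k : (1 <= k)%N -> energy k <= dotv (x 1%N - xs) (x 1%N - xs).
Proof.
elim: k => [//|[_ _|k IH _]]; first exact: energy1_le.
exact: le_trans (energyS_le k.+1 isT) (IH isT).
Qed.

Lemma suboptimality_le k : (1 <= k)%N ->
  f (y k.+1) - f xs <= 6 * L * dotv (x 1%N - xs) (x 1%N - xs) / k%:R ^+ 2.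
Proof.
move=> k_ge1; have := energy_le k k_ge1; rewrite /energy.
have := dotvv_ge0 (u k); have := beta_ge k k_ge1; have := lam_ge_third k k_ge1.
have k_gt0 : 0 < k%:R :> R by rewrite ltr0n.
rewrite ler_pdivlMr ?exprn_gt0 //.
set l3 := 1 / (3 * L); set dl := f (y k.+1) - f xs.
set N := dotv (x 1%N - xs) _; set b := beta k; set l := lam k.
move=> l_ge b_ge U_ge0 energy_bnd.
have l3_gt0 : 0 < l3 by rewrite divr_gt0 // mulr_gt0.
have dl_ge0 : 0 <= dl by rewrite subr_ge0.
have k_le : k%:R ^+ 2 <= 4 * b ^+ 2 by nra.
have : l3 * k%:R ^+ 2 * dl <= 2 * N.
  have l_ge0 : 0 <= l := le_trans (ltW l3_gt0) l_ge.
  have := ler_wpM2l l_ge0 k_le; have := ler_wpM2r (sqr_ge0 k%:R) l_ge.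
  move=> /le_trans/[apply]/(ler_wpM2r dl_ge0); lra.
have -> : dl * k%:R ^+ 2 = 3 * L * (l3 * k%:R ^+ 2 * dl).
  by rewrite /l3; field; rewrite lt0r_neq0.
have L3_ge0 : 0 <= 3 * L by rewrite mulr_ge0 // ltW.
have -> : 6 * L * N = 3 * L * (2 * N) by ring.
exact: ler_wpM2l.
Qed.

End Fista.

Theorem corollary3p2 (R : realType) (d : nat) :
  exists D' : 'rV[R]_d -> 'rV[R]_d -> R -> R,
  forall (f : 'rV[R]_d -> R) (g : 'rV[R]_d -> 'rV[R]_d) (L : R) (xs : 'rV[R]_d)
         (x y : nat -> 'rV[R]_d) (lam beta : nat -> R),
    convex_fun f ->
    is_gradient f g ->
    0 < L ->
    (forall u v, enorm (g u - g v) <= L * enorm (u - v)) ->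
    (forall u, f xs <= f u) ->
    x 1%N = y 1%N ->
    1 / (3 * L) <= lam 0%N ->
    beta 1%N = 1 ->
    (forall k, (1 <= k)%N ->
       beta k.+1 = (1 + Num.sqrt (1 + 4 * beta k ^+ 2)) / 2) ->
    (forall k, (1 <= k)%N -> is_max_step f g (x k) (lam k.-1) (lam k)) ->
    (forall k, (1 <= k)%N -> y k.+1 = x k - lam k *: g (x k)) ->
    (forall k, (1 <= k)%N ->
       x k.+1 = y k.+1 + ((beta k - 1) / beta k.+1) *: (y k.+1 - y k)) ->
    (forall k, (1 <= k)%N -> 1 / (3 * L) <= lam k) /\
    (forall k, (1 <= k)%N -> f (y k.+1) - f xs <= D' (x 1%N) xs L / (k%:R ^+ 2)).
Proof.
exists (fun x1 xs L => 6 * L * dotv (x1 - xs) (x1 - xs)).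
(* y_1 never matters: beta_1 = 1 cancels it in x_2 and in the energy at k = 1. *)
move=> f g L xs x y lam beta cvx_f grad_g L_gt0 lip xs_min _ lam0 beta1 betaS lam_max yS xS.
split.
- exact: lam_ge_third cvx_f grad_g L_gt0 lip lam0 lam_max.
- exact: suboptimality_le cvx_f grad_g L_gt0 lip xs_min lam0 beta1 betaS lam_max yS xS.
Qed.
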